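(* Let $\mathcal{T}_{5,1}$ be the set of $s\in\mathcal{A}^*$ with $|s|\ne\mathsf{rmin}(s)+1$, $\mathrm{sebr}(s)\ne0$, $\mathrm{sebr}(s)>\mathrm{Rmin}(s)_{\mathsf{rpos}(s)+1}$ and $\mathrm{Prm}(s)_{\mathsf{rpos}(s)+1}=\mathrm{Prm}(s)_{\mathsf{rpos}(s)}+1$. For every $n$ there is a bijection $f_{5,1}$ from $\mathcal{T}_{5,1}\cap\mathcal{A}_n$ onto the set of $s\in\mathcal{A}_n$ such that $\mathsf{rpos}(s)\ne0$, the rightmost occurrence of $\mathrm{Rmin}(s)_{\mathsf{rpos}(s)-1}$ is adjacent to the second rightmost occurrence of $\mathrm{Rmin}(s)_{\mathsf{rpos}(s)}$, and the two rightmost occurrences of $\mathrm{Rmin}(s)_{\mathsf{rpos}(s)}$ are not adjacent and have no $\mathcal{M}$asc between them. Moreover for all $s$: $\mathsf{asc},\mathsf{rep},\mathsf{max},\mathsf{ealm},\mathsf{rmin}$ take equal values on $s$ and $f_{5,1}(s)$, $\mathsf{rpos}(s)=\mathsf{rpos}(f_{5,1}(s))-1$, and $\mathsf{zero}(s)=\mathsf{zero}(f_{5,1}(s))+\chi(\mathsf{rpos}(s)=0)$.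
   Context: For a sequence $s$, $\mathsf{asc}(s)=|\{i:s_i<s_{i+1}\}|$. An ascent sequence is a sequence $s=(s_1,\dots,s_n)$ of non-negative integers with $s_1=0$, $s_i\le\mathsf{asc}(s_1,\dots,s_{i-1})+1$ for $i\ge2$; $\mathcal{A}_n$ is the set of those of length $n$, $|s|$ the length; $\mathcal{A}^*$ is the set of all ascent sequences except those of the form $(0,1,\dots,|s|-1)$. $\mathsf{rep}(s)=|s|-|\{s_i\}|$; $\mathsf{zero}(s)=|\{i:s_i=0\}|$; $\mathsf{max}(s)=|\{i:s_i=i-1\}|$; $\mathsf{ealm}(s)=s_{\mathsf{max}(s)+1}$ if $\mathsf{max}(s)\ne|s|$, else $0$. A right-to-left minimum is an entry $s_i$ with $s_i<s_j$ for all $j>i$; $\mathsf{rmin}(s)$ is their number; they are indexed $0,\dots,\mathsf{rmin}(s)-1$ from left to right, with values $\mathrm{Rmin}(s)_m$ and positions $\mathrm{Prm}(s)_m$. $\mathsf{rpos}(s)$: $0$ if $\mathsf{rmin}(s)=|s|$; otherwise the maximal $m$ such that the value $\mathrm{Rmin}(s)_m$ occurs at least twice after position $\mathrm{Prm}(s)_{m-1}$ (for $m=0$: at least twice in $s$), and $0$ if none. $\mathrm{sebr}(s)$ is the smallest entry strictly between the two rightmost occurrences of $\mathrm{Rmin}(s)_{\mathsf{rpos}(s)}$, and $0$ if they are adjacent; when $\mathsf{rpos}(s)=\mathsf{rmin}(s)-1$ one regards $\mathrm{sebr}(s)<\mathrm{Rmin}(s)_{\mathsf{rpos}(s)+1}$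 as true. An entry $s_i$ is an $\mathcal{M}$asc if $s_i=\mathsf{asc}(s_1,\dots,s_{i-1})+1$. $\chi(P)=1$ if $P$ holds, else $0$. *)

From mathcomp Require Import all_boot.
Set Implicit Arguments. Unset Strict Implicit. Unset Printing Implicit Defensive.

(* Sequences are seq nat; positions are 0-based internally
   (position i here = position i+1 in the paper). *)

Fixpoint asc (s : seq nat) : nat :=
  match s with
  | x :: ((y :: _) as t) => (x < y) + asc t
  | _ => 0
  end.

Definition is_ascent (s : seq nat) : bool :=
  [&& s != [::], nth 0 s 0 == 0 &
      all (fun i => nth 0 s i <= (asc (take i s)).+1) (iota 1 (size s).-1)].

Definition in_A (n : nat) (s : seq nat) : bool := is_ascent s && (size s == n).

Definition in_Astar (s : seq nat) : bool :=
  is_ascent s && (s != iota 0 (size s)).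

Definition rep (s : seq nat) : nat := size s - size (undup s).
Definition zero (s : seq nat) : nat := count_mem 0 s.
Definition maxst (s : seq nat) : nat :=
  count (fun i => nth 0 s i == i) (iota 0 (size s)).
Definition ealm (s : seq nat) : nat :=
  if maxst s != size s then nth 0 s (maxst s) else 0.

Definition rminpos (s : seq nat) : seq nat :=
  filter (fun i => all (fun j => nth 0 s i < nth 0 s j) (iota i.+1 (size s - i.+1)))
         (iota 0 (size s)).
Definition rmin (s : seq nat) : nat := size (rminpos s).
Definition Prm (s : seq nat) (m : nat) : nat := nth 0 (rminpos s) m.
Definition Rmin (s : seq nat) (m : nat) : nat := nth 0 s (Prm s m).

Definition occ (s : seq nat) (v : nat) : seq nat :=
  filter (fun i => nth 0 s i == v) (iota 0 (size s)).
Definition rocc1 (s : seq nat) (v : nat) : nat := nth 0 (rev (occ s v)) 0.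
Definition rocc2 (s : seq nat) (v : nat) : nat := nth 0 (rev (occ s v)) 1.

Definition rpos_cond (s : seq nat) (m : nat) : bool :=
  1 < count (fun i => (m == 0) || (Prm s (m.-1) < i)) (occ s (Rmin s m)).

Definition rpos (s : seq nat) : nat :=
  if rmin s == size s then 0
  else last 0 (filter (rpos_cond s) (iota 0 (rmin s))).

(* smallest entry strictly between the two rightmost occurrences of
   Rmin_{rpos}; 0 if they are adjacent (or if there are fewer than two) *)
Definition sebr (s : seq nat) : nat :=
  let v := Rmin s (rpos s) in
  if size (occ s v) < 2 then 0 else
  let a := rocc2 s v in let b := rocc1 s v in
  match [seq nth 0 s i | i <- iota a.+1 (b - a.+1)] with
  | x :: t => foldr minn x t
  | [::] => 0
  end.

Definition adjacent (i j : nat) : bool := (i.+1 == j) || (j.+1 == i).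

Definition masc (s : seq nat) (i : nat) : bool :=
  nth 0 s i == (asc (take i s)).+1.

(* T_{5,1}.  "sebr(s) > Rmin_{rpos+1}" is false when rpos = rmin - 1
   (convention: then sebr < Rmin_{rpos+1} is regarded as true). *)
Definition in_T51 (s : seq nat) : bool :=
  [&& in_Astar s, size s != (rmin s).+1, sebr s != 0,
      ((rpos s).+1 < rmin s) && (Rmin s (rpos s).+1 < sebr s) &
      Prm s (rpos s).+1 == (Prm s (rpos s)).+1].

Definition in_target (n : nat) (s : seq nat) : bool :=
  let v := Rmin s (rpos s) in
  [&& in_A n s, rpos s != 0,
      adjacent (Prm s (rpos s).-1) (rocc2 s v),
      ~~ adjacent (rocc2 s v) (rocc1 s v) &
      ~~ has (masc s) (iota (rocc2 s v).+1 (rocc1 s v - (rocc2 s v).+1))].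

(* An element of T51 has the shape [P v w W v u R]: the two [v]s are the two
   rightmost occurrences of [v = Rmin_rpos], [u = Rmin_(rpos+1)] follows the
   second one, and [w :: W] and [R] lie above [u] since [sebr > u].  The map
   [f51] sends it to [P v u w W u R].  There [u] becomes the last repeated
   right-to-left minimum, so rpos grows by one, while [P], the right-to-left
   minima and the set of values are untouched; the ascents [v < w], [v < u]
   become [v < u], [u < w].  In the image the block [w :: W] follows one more
   ascent, so the bounds of the ascent condition on it rise by one: the image is
   an ascent sequence, and conversely [P v w W v u R] is one exactly when no
   entry of the block is an M-asc of the image.  Reading [v] and [u] at
   [Prm_(rpos-1)] and [Prm_rpos], these images are exactly the target
   sequences. *)

From mathcomp Require Import all_boot zify.
Set Implicit Arguments. Unset Strict Implicit. Unset Printing Implicit Defensive.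

Section SeqFacts.
Variables (T : Type) (x0 : T).
Implicit Types (A B s : seq T).

Lemma nth_cat_addn A B j : nth x0 (A ++ B) (size A + j) = nth x0 B j.
Proof. by rewrite nth_cat ltnNge leq_addr /= addKn. Qed.

Lemma drop_cat_addn A B j : drop (size A + j) (A ++ B) = drop j B.
Proof. by rewrite drop_cat ltnNge leq_addr /= addKn. Qed.

Lemma take_cat_addn A B j : take (size A + j) (A ++ B) = A ++ take j B.
Proof. by rewrite take_cat ltnNge leq_addr /= addKn. Qed.

Lemma nth_rev0 s : nth x0 (rev s) 0 = last x0 s.
Proof. by case/lastP: s => [|s x] //; rewrite rev_rcons last_rcons. Qed.

End SeqFacts.

Lemma iota_succ m n : iota m.+1 n = map succn (iota m n).
Proof. by rewrite -add1n iotaDl. Qed.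

Lemma filter_in_pred0 (T : eqType) (a : pred T) (s : seq T) :
  {in s, forall i, ~~ a i} -> filter a s = [::].
Proof. by move=> h; rewrite -(@eq_in_filter _ pred0) ?filter_pred0 // => i /h /negbTE. Qed.

Lemma ltn_foldr_minn u w W : (u < foldr minn w W) = all (fun z => u < z) (w :: W).
Proof. by elim: W => [|y W IH] /=; rewrite ?andbT // leq_min IH /= andbCA. Qed.

Lemma all_drop_ltn_nth x q y j : all (fun z => y < z) (drop q.+1 x) -> q < j < size x ->
  y < nth 0 x j.
Proof.
move=> /(all_nthP 0) h /andP[hqj hj].
by have := h (j - q.+1); rewrite size_drop nth_drop subnKC //; apply; lia.
Qed.

Section LastFilterIota.
Variables (a : pred nat) (n : nat).

Lemma last_filter_iota_ge m : m < n -> a m -> m <= last 0 (filter a (iota 0 n)).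
Proof.
move=> hmn ham; have -> : n = m + (n - m.+1).+1 by lia.
rewrite iotaD filter_cat add0n /= ham last_cat /=.
set F := filter _ _; have := mem_last m F; rewrite inE => /orP[/eqP -> //|].
by rewrite /F mem_filter mem_iota => /and3P[_ /ltnW].
Qed.

Lemma last_filter_iota_eq r : r < n -> a r -> (forall m, r < m < n -> ~~ a m) ->
  last 0 (filter a (iota 0 n)) = r.
Proof.
move=> hrn har h; have -> : n = r.+1 + (n - r.+1) by lia.
rewrite iotaD filter_cat add0n (@filter_in_pred0 _ a (iota r.+1 _)); last first.
  by move=> i; rewrite mem_iota => /andP[h1 h2]; apply: h; lia.
by rewrite cats0 -addn1 iotaD filter_cat /= har last_cat.
Qed.

Lemma last_filter_iota_mem : filter a (iota 0 n) != [::] ->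
  a (last 0 (filter a (iota 0 n))) && (last 0 (filter a (iota 0 n)) < n).
Proof.
case E: (filter a (iota 0 n)) => [|y F] // _.
by have := mem_last y F; rewrite -E mem_filter mem_iota /= E.
Qed.

End LastFilterIota.

Lemma asc_cons2 x y r : asc (x :: y :: r) = (x < y) + asc (y :: r).
Proof. by []. Qed.

Lemma asc_cat l A B : asc (l :: A ++ B) = asc (l :: A) + asc (last l A :: B).
Proof. by elim: A l => [|y A IH] l //; rewrite cat_cons !asc_cons2 IH addnA. Qed.

Lemma asc_cons0 x : nth 0 x 0 = 0 -> asc (0 :: x) = asc x.
Proof. by case: x => [|y x] //= ->. Qed.

Lemma asc_leq_size x : asc x <= (size x).-1.
Proof.
by elim: x => [|a [|b r] IH] //; rewrite asc_cons2; move: IH => /=; case: (a < b); lia.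
Qed.

Lemma sorted_asc_max x : asc x = (size x).-1 -> sorted ltn x.
Proof.
elim: x => [|a [|b r] IH] //; have hle := asc_leq_size (b :: r).
rewrite asc_cons2 => h; have hab : a < b by move: h hle; case: (a < b) => //=; lia.
by rewrite /sorted /= hab /=; apply: IH; move: h hle; rewrite hab /=; lia.
Qed.

Lemma sorted_ltn_nth_addn x j : sorted ltn x -> j < size x -> nth 0 x 0 + j <= nth 0 x j.
Proof.
elim: x j => [|a r IH] [|j] //= hs hj; first by rewrite addn0.
case: r IH hs hj => [|b r] IH //= /andP[hab hp] hj.
by have := IH j hp hj => /=; lia.
Qed.

(* After a prefix with [a] ascents ending in [l], every entry of [x] is at most
   (resp. differs from) the bound [asc + 1] of the ascent condition. *)
Fixpoint ascent_after (a l : nat) (x : seq nat) : bool :=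
  if x is y :: r then (y <= a.+1) && ascent_after (a + (l < y)) y r else true.

Fixpoint no_masc_after (a l : nat) (x : seq nat) : bool :=
  if x is y :: r then (y != a.+1) && no_masc_after (a + (l < y)) y r else true.

Lemma ascent_after_cons a l y r :
  ascent_after a l (y :: r) = (y <= a.+1) && ascent_after (a + (l < y)) y r.
Proof. by []. Qed.

Lemma ascent_after_cat a l A B :
  ascent_after a l (A ++ B) =
  ascent_after a l A && ascent_after (a + asc (l :: A)) (last l A) B.
Proof. by elim: A a l => [|y A IH] a l /=; rewrite ?addn0 // IH addnA andbA. Qed.

Lemma ascent_afterE a l x : ascent_after a l x =
  all (fun i => nth 0 x i <= a + asc (l :: take i x) + 1) (iota 0 (size x)).
Proof.
elim: x a l => [|y x IH] a l //=.
by rewrite addn0 addn1 IH iota_succ all_map; congr andb; apply: eq_all => i /=; rewrite addnA.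
Qed.

Lemma no_masc_afterE a l x : no_masc_after a l x =
  all (fun i => nth 0 x i != a + asc (l :: take i x) + 1) (iota 0 (size x)).
Proof.
elim: x a l => [|y x IH] a l //=.
by rewrite addn0 addn1 IH iota_succ all_map; congr andb; apply: eq_all => i /=; rewrite addnA.
Qed.

Lemma ascent_after_mono a a' l x : a <= a' -> ascent_after a l x -> ascent_after a' l x.
Proof.
elim: x a a' l => [|y x IH] a a' l //= h /andP[h1 h2].
by apply/andP; split; [lia | apply: IH h2; lia].
Qed.

Lemma ascent_after_no_masc a l x : ascent_after a l x -> no_masc_after a.+1 l x.
Proof.
elim: x a l => [|y x IH] a l //= /andP[h1 h2].
by apply/andP; split; [lia | rewrite addSn; apply: IH].
Qed.

Lemma ascent_after_pred a l x :
  ascent_after a.+1 l x -> no_masc_after a.+1 l x -> ascent_after a l x.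
Proof.
elim: x a l => [|y x IH] a l //= /andP[h1 h2] /andP[h3 h4].
by apply/andP; split; [lia | apply: IH; rewrite -addSn].
Qed.

Lemma is_ascentE x : is_ascent x = [&& x != [::], nth 0 x 0 == 0 & ascent_after 0 0 x].
Proof.
case: x => [|y x] //; rewrite /is_ascent /=; case: eqP => [->|] //=.
by rewrite ascent_afterE iota_succ all_map; apply: eq_all => i /=; rewrite add0n addn1.
Qed.

Lemma ascent_nth_leq x i : is_ascent x -> i < size x -> nth 0 x i <= asc (take i x) + 1.
Proof.
case/and3P => _ /eqP h0 /allP hall hi; case: i hi => [|i] hi; first by rewrite h0.
by have := hall i.+1; rewrite mem_iota; move=> /(_ ltac:(lia)); lia.
Qed.

Lemma ascent_nth_leq_index x i : is_ascent x -> nth 0 x i <= i.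
Proof.
move=> ha; case: (ltnP i (size x)) => hi; last by rewrite nth_default.
have := ascent_nth_leq ha hi; have := asc_leq_size (take i x); rewrite size_take hi.
case: i hi => [|i] hi; last lia.
by case/and3P: ha => _ /eqP ->.
Qed.

(* A fixed point [x_i = i] forces [asc (take i x) = i - 1], so the prefix is
   [0, 1, ..., i - 1]. *)
Lemma ascent_fixed_prefix x i j : is_ascent x -> nth 0 x i = i -> j <= i -> nth 0 x j = j.
Proof.
move=> ha hi hji; case: (ltnP i (size x)) => hs; last first.
  move: hi; rewrite nth_default // => ei; have -> : j = 0 by lia.
  by case/and3P: ha => _ /eqP ->.
case: (ltngtP j i) hji => // hlt _; last by rewrite hlt.
have h1 := ascent_nth_leq ha hs; have h2 := asc_leq_size (take i x).
rewrite size_take hs in h2.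
have hs2 : sorted ltn (take i x) by apply: sorted_asc_max; rewrite size_take hs; lia.
have := sorted_ltn_nth_addn hs2 (j := j); rewrite size_take hs => /(_ hlt).
rewrite (nth_take _ hlt) (nth_take _ (leq_ltn_trans (leq0n j) hlt)).
by case/and3P: ha (ha) => _ /eqP -> _ /(ascent_nth_leq_index j); lia.
Qed.

Definition positions (Q : nat -> seq nat -> bool) (x : seq nat) : seq nat :=
  filter (fun i => Q (nth 0 x i) (drop i.+1 x)) (iota 0 (size x)).

Definition below (y : nat) (r : seq nat) : bool := all (fun z => y < z) r.
Definition at_value (c y : nat) (r : seq nat) : bool := y == c.

Lemma rminposE x : rminpos x = positions below x.
Proof.
rewrite /rminpos /positions; apply: eq_in_filter => i; rewrite mem_iota => /andP[_ lt].
have -> : drop i.+1 x = map (nth 0 x) (iota i.+1 (size x - i.+1)).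
  by rewrite map_nth_iota // take_oversize // size_drop.
by rewrite /below all_map.
Qed.

Lemma occE x c : occ x c = positions (at_value c) x.
Proof. by []. Qed.

Lemma positions_cat Q A B : positions Q (A ++ B) =
  filter (fun i => Q (nth 0 A i) (drop i.+1 A ++ B)) (iota 0 (size A))
  ++ map (addn (size A)) (positions Q B).
Proof.
rewrite /positions size_cat iotaD filter_cat add0n; congr (_ ++ _).
  apply: eq_in_filter => i; rewrite mem_iota add0n => /andP[_ lti].
  rewrite nth_cat lti drop_cat; case: ltnP => h //.
  have -> : i.+1 = size A by lia.
  by rewrite subnn drop0 drop_size.
rewrite -{1}[size A]addn0 iotaDl filter_map; congr map.
by apply: eq_filter => j /=; rewrite nth_cat_addn -addnS drop_cat_addn.
Qed.

Lemma positions_cons Q a x :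
  positions Q (a :: x) = (if Q a x then [:: 0] else [::]) ++ map succn (positions Q x).
Proof. by rewrite -cat1s positions_cat. Qed.

Lemma positions_nil Q x :
  (forall i, i < size x -> ~~ Q (nth 0 x i) (drop i.+1 x)) -> positions Q x = [::].
Proof. by move=> h; apply: filter_in_pred0 => i; rewrite mem_iota => /andP[_ /h]. Qed.

Lemma positions_at_value_nil c x : below c x -> positions (at_value c) x = [::].
Proof.
move=> /allP h; apply: positions_nil => i hi; rewrite /at_value.
by move: (h _ (mem_nth 0 hi)); rewrite ltn_neqAle eq_sym => /andP[].
Qed.

Lemma count_gt_positions_cat Q A B c : size A <= c.+1 ->
  count (fun i => c < i) (positions Q (A ++ B)) =
  count (fun i => c < i) (map (addn (size A)) (positions Q B)).
Proof.
move=> h; rewrite positions_cat count_cat (@eq_in_count _ _ pred0) ?count_pred0 // => i.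
by rewrite mem_filter mem_iota => /and3P[_ _ lt] /=; apply/negbTE; rewrite -leqNgt; lia.
Qed.

(** * Right-to-left minima *)

Lemma mem_rminpos x q : (q \in rminpos x) = (q < size x) && below (nth 0 x q) (drop q.+1 x).
Proof. by rewrite rminposE /positions mem_filter mem_iota add0n andbC. Qed.

Lemma rmin_leq_size x : rmin x <= size x.
Proof. by rewrite /rmin size_filter (leq_trans (count_size _ _)) // size_iota. Qed.

Lemma sorted_rminpos x : sorted ltn (rminpos x).
Proof. by rewrite /rminpos sorted_filter //; [exact: ltn_trans | exact: iota_ltn_sorted]. Qed.

Lemma Prm_rminpos x m : m < rmin x ->
  Prm x m < size x /\ below (Rmin x m) (drop (Prm x m).+1 x).
Proof. by move=> hm; apply/andP; rewrite -mem_rminpos mem_nth. Qed.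

Lemma Prm_lt x i j : i < j -> j < rmin x -> Prm x i < Prm x j.
Proof.
move=> hij hj; apply: (sorted_ltn_nth ltn_trans 0 (sorted_rminpos x)) => //.
by rewrite inE (ltn_trans hij).
Qed.

Lemma Prm_le x i j : i <= j -> j < rmin x -> Prm x i <= Prm x j.
Proof. by rewrite leq_eqVlt => /orP[/eqP -> //|h] hj; apply/ltnW/Prm_lt. Qed.

Lemma Prm_inj x i j : i < rmin x -> j < rmin x -> Prm x i = Prm x j -> i = j.
Proof.
move=> hi hj e; case: (ltngtP i j) => // h.
- by have := Prm_lt h hj; rewrite e ltnn.
- by have := Prm_lt h hi; rewrite e ltnn.
Qed.

Lemma rminpos_leq_exists x i : i < size x ->
  exists j, [/\ i <= j, j \in rminpos x & nth 0 x j <= nth 0 x i].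
Proof.
move: {2}(size x - i) (leqnn (size x - i)) => k.
elim: k i => [|k IH] i hk hi; first lia.
case h: (below (nth 0 x i) (drop i.+1 x)).
  by exists i; split => //; rewrite mem_rminpos hi h.
move/negbT: h => /allPn [z hz hle].
have hj : index z (drop i.+1 x) < size (drop i.+1 x) by rewrite index_mem.
have ez := nth_index 0 hz; rewrite nth_drop in ez.
rewrite size_drop in hj.
have [j [h1 h2 h3]] := IH (i.+1 + index z (drop i.+1 x)) ltac:(lia) ltac:(lia).
by exists j; split => //; [lia | rewrite ez in h3; lia].
Qed.

Lemma Rmin_leq_between x k j : k.+1 < rmin x -> Prm x k < j < Prm x k.+1 ->
  Rmin x k.+1 <= nth 0 x j.
Proof.
move=> hk /andP[hkj hjk]; have [hsz hall] := Prm_rminpos hk.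
rewrite leqNgt; apply/negP => hlt.
have [j' [hjj' hj' hle]] := rminpos_leq_exists (ltn_trans hjk hsz).
have hi : index j' (rminpos x) < rmin x by rewrite /rmin index_mem.
have ej : Prm x (index j' (rminpos x)) = j' by rewrite /Prm nth_index.
case: (ltngtP (index j' (rminpos x)) k.+1) => hik.
- have hik' : index j' (rminpos x) <= k by lia.
  by have := Prm_le hik' (ltnW hk); rewrite ej; lia.
- have hj's : j' < size x by move: hj'; rewrite mem_rminpos => /andP[].
  have := Prm_lt hik hi; rewrite ej => hbj.
  have hbj' : Prm x k.+1 < j' < size x by rewrite hbj.
  by have := all_drop_ltn_nth hall hbj'; rewrite /Rmin in hlt *; lia.
- by move: hle; rewrite -ej hik; rewrite /Rmin in hlt; lia.
Qed.

Lemma occ_below x q : q < size x -> below (nth 0 x q) (drop q.+1 x) ->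
  occ x (nth 0 x q) = rcons (filter (fun i => nth 0 x i == nth 0 x q) (iota 0 q)) q.
Proof.
move=> hq hb; rewrite /occ (_ : size x = q + (size x - q.+1).+1); last lia.
rewrite iotaD filter_cat add0n /= eqxx -cats1; congr (_ ++ _ :: _).
apply: filter_in_pred0 => i; rewrite mem_iota => /andP[h1 h2].
have hi : q < i < size x by lia.
by have := all_drop_ltn_nth hb hi; rewrite ltn_neqAle eq_sym => /andP[].
Qed.

Lemma rocc_below x q : q < size x -> below (nth 0 x q) (drop q.+1 x) ->
  rocc1 x (nth 0 x q) = q /\
  rocc2 x (nth 0 x q) = last 0 (filter (fun i => nth 0 x i == nth 0 x q) (iota 0 q)).
Proof. by move=> hq hb; rewrite /rocc1 /rocc2 (occ_below hq hb) rev_rcons /= nth_rev0. Qed.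

Lemma rpos_max x m : rmin x != size x -> rpos x < m < rmin x -> ~~ rpos_cond x m.
Proof.
rewrite /rpos => /negbTE -> /andP[h1 h2]; apply/negP => hc.
by have := last_filter_iota_ge h2 hc; lia.
Qed.

Lemma rpos_eq x r : rmin x != size x -> r < rmin x -> rpos_cond x r ->
  (forall m, r < m < rmin x -> ~~ rpos_cond x m) -> rpos x = r.
Proof. by rewrite /rpos => /negbTE ->; exact: last_filter_iota_eq. Qed.

Lemma rpos_neq0 x : rpos x != 0 ->
  [/\ rmin x != size x, rpos x < rmin x & rpos_cond x (rpos x)].
Proof.
rewrite /rpos; case: (rmin x =P size x) => // /eqP hne.
case E: (filter (rpos_cond x) (iota 0 (rmin x))) => [|y F] //= _.
have := last_filter_iota_mem (a := rpos_cond x) (n := rmin x); rewrite E /= => /(_ isT).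
by case/andP => h1 h2; split => //; exact/eqP.
Qed.

(* With [q = Prm s (rpos s)], [f51] turns [P v w W v u R] into [P v u w W u R],
   where the [v]s are the two rightmost occurrences of [s_q] (the second at [q]);
   [f51_inv] reads [a = Prm t (rpos t).-1] and [b = Prm t (rpos t)] in the
   image and undoes this. *)
Definition f51 (s : seq nat) : seq nat :=
  let q := Prm s (rpos s) in let v := nth 0 s q in
  let a := rocc2 s v in let u := nth 0 s q.+1 in
  take a s ++ v :: u :: take (q - a.+1) (drop a.+1 s) ++ u :: drop q.+2 s.

Definition f51_inv (t : seq nat) : seq nat :=
  let b := Prm t (rpos t) in let a := Prm t (rpos t).-1 in
  let v := nth 0 t a in let u := nth 0 t b in
  take a t ++ v :: take (b - a.+2) (drop a.+2 t) ++ v :: u :: drop b.+1 t.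

Definition pattern51 (W R : seq nat) (v u w : nat) : Prop :=
  [/\ v < u, u < w, below u W & below u R].

Lemma below_catF c y Z1 Z2 : c <= y -> below y (Z1 ++ c :: Z2) = false.
Proof. by move=> h; rewrite /below all_cat /= ltnNge h /= andbF. Qed.

Lemma maxst_take x q : q <= size x -> (forall i, q <= i -> nth 0 x i != i) ->
  maxst x = count (fun i => nth 0 x i == i) (iota 0 q).
Proof.
move=> hq h; rewrite /maxst (_ : size x = q + (size x - q)); last lia.
rewrite iotaD count_cat add0n (@eq_in_count _ _ pred0 (iota q _)) ?count_pred0 ?addn0 //.
by move=> i; rewrite mem_iota => /andP[h1 _]; apply/negbTE/h.
Qed.

(** * The pattern [P v w W v u R] and its image [P v u w W u R] *)

Section Pattern.
Variables (P W R : seq nat) (v u w : nat).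
Hypothesis Hpat : pattern51 W R v u w.

Let Hvu : v < u. Proof. by case: Hpat. Qed.
Let Huw : u < w. Proof. by case: Hpat. Qed.
Let HW : below u W. Proof. by case: Hpat. Qed.
Let HR : below u R. Proof. by case: Hpat. Qed.

Let s := P ++ v :: w :: W ++ v :: u :: R.
Let t := P ++ v :: u :: w :: W ++ u :: R.
Let p := size P.
Let m := size W.
Let L := filter (fun i => below (nth 0 P i) (drop i.+1 P ++ v :: w :: W ++ v :: u :: R))
           (iota 0 p).
Let l := size L.
Let X := map (addn (p + m + 4)) (rminpos R).

Lemma below_wW : below u (w :: W).
Proof. exact/andP. Qed.

Lemma below_nth_wW i : i < (size W).+1 -> u < nth 0 (w :: W) i.
Proof. by move=> hi; apply: (all_nthP 0 below_wW). Qed.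

Lemma last_wW : u < last w W.
Proof. by have := mem_last w W; move: below_wW => /allP h /h. Qed.

Lemma last_wW_ltnF : (last w W < u) = false.
Proof. by apply/negbTE; rewrite -leqNgt ltnW // last_wW. Qed.

Lemma last_wW_ltnF_v : (last w W < v) = false.
Proof. by apply/negbTE; rewrite -leqNgt ltnW // (ltn_trans Hvu last_wW). Qed.

Lemma below_vR : below v R.
Proof. by apply: sub_all HR => z /= h; apply: ltn_trans h. Qed.

Lemma positions_wW (Q : nat -> seq nat -> bool) Z :
  (forall i, i < (size W).+1 -> ~~ Q (nth 0 (w :: W) i) (drop i.+1 (w :: W) ++ Z)) ->
  positions Q (w :: W ++ Z) = map (addn (size W).+1) (positions Q Z).
Proof.
move=> h; rewrite -cat_cons positions_cat filter_in_pred0 //.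
by move=> i; rewrite mem_iota => /andP[_ hi]; apply: h; move: hi => /=; lia.
Qed.

Lemma rminpos_src : rminpos s = L ++ [:: p + m + 2, p + m + 3 & X].
Proof.
rewrite rminposE positions_cat; congr (_ ++ _).
rewrite positions_cons (@below_catF _ _ (w :: W)) // positions_wW; last first.
  by move=> i hi; rewrite below_catF // ltnW // (ltn_trans Hvu (below_nth_wW hi)).
have bv : below v (u :: R) by apply/andP; split; [exact: Hvu | exact: below_vR].
rewrite !positions_cons bv HR /= /X rminposE /p /m -!map_comp.
by congr [:: _, _ & _]; [lia | lia | apply: eq_map => j /=; lia].
Qed.

Lemma rminpos_img : rminpos t = L ++ [:: p, p + m + 3 & X].
Proof.
rewrite rminposE positions_cat; congr (_ ++ _).
  apply: eq_filter => i; rewrite /below !all_cat /= !all_cat /=.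
  by case: (_ < v); case: (_ < u); case: (_ < w); case: (all _ W); case: (all _ R).
have bv : below v (u :: w :: W ++ u :: R).
  rewrite /below /= all_cat /=; apply/and5P; split; try exact: Hvu.
  - exact: ltn_trans Huw.
  - by apply: sub_all HW => z /= h; apply: ltn_trans h.
  - exact: below_vR.
rewrite positions_cons bv positions_cons (@below_catF _ _ (w :: W)) //.
rewrite positions_wW; last first.
  by move=> i hi; rewrite below_catF // ltnW // below_nth_wW.
rewrite positions_cons HR /= /X rminposE /p /m -!map_comp.
by congr [:: _, _ & _]; [lia | lia | apply: eq_map => j /=; lia].
Qed.

Lemma occ_src_v : occ s v = filter (fun i => nth 0 P i == v) (iota 0 p) ++ [:: p; p + m + 2].
Proof.
rewrite occE positions_cat; congr (_ ++ _).
rewrite positions_cons {1}/at_value eqxx positions_wW; last first.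
  by move=> i hi; rewrite /at_value gtn_eqF // (ltn_trans Hvu (below_nth_wW hi)).
rewrite positions_cons {1}/at_value eqxx positions_cons {1}/at_value gtn_eqF //.
rewrite positions_at_value_nil /=; last exact: below_vR.
by rewrite /p /m; congr [:: _; _]; lia.
Qed.

Lemma occ_img_u :
  occ t u = filter (fun i => nth 0 P i == u) (iota 0 p) ++ [:: p.+1; p + m + 3].
Proof.
rewrite occE positions_cat; congr (_ ++ _).
rewrite positions_cons {1}/at_value ltn_eqF // positions_cons {1}/at_value eqxx.
rewrite positions_wW; last by move=> i hi; rewrite /at_value gtn_eqF // below_nth_wW.
rewrite positions_cons {1}/at_value eqxx positions_at_value_nil //=.
by rewrite /p /m; congr [:: _; _]; lia.
Qed.

Lemma occ_src_u : occ s u = filter (fun i => nth 0 P i == u) (iota 0 p) ++ [:: p + m + 3].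
Proof.
rewrite occE positions_cat; congr (_ ++ _).
rewrite positions_cons {1}/at_value ltn_eqF // positions_wW; last first.
  by move=> i hi; rewrite /at_value gtn_eqF // below_nth_wW.
rewrite positions_cons {1}/at_value ltn_eqF // positions_cons {1}/at_value eqxx.
by rewrite positions_at_value_nil //= /p /m; congr [:: _]; lia.
Qed.

Let src_head := P ++ v :: w :: W ++ [:: v; u].
Let img_head := P ++ v :: u :: w :: W ++ [:: u].

Lemma src_cat : s = src_head ++ R. Proof. by rewrite /s /src_head -catA /= -catA. Qed.
Lemma img_cat : t = img_head ++ R. Proof. by rewrite /t /img_head -catA /= -catA. Qed.
Lemma size_src_head : size src_head = p + m + 4.
Proof. by rewrite /src_head size_cat /= size_cat /= /p /m; lia. Qed.
Lemma size_img_head : size img_head = p + m + 4.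
Proof. by rewrite /img_head size_cat /= size_cat /= /p /m; lia. Qed.

Lemma size_src : size s = p + m + 4 + size R.
Proof. by rewrite src_cat size_cat size_src_head. Qed.

Lemma size_img : size t = size s.
Proof. by rewrite size_src img_cat size_cat size_img_head. Qed.

Lemma nth_src_img_lt i : i < p -> nth 0 s i = nth 0 t i.
Proof. by move=> h; rewrite /s /t !nth_cat h. Qed.

Lemma nth_src_p : nth 0 s p = v.
Proof. by rewrite /s /p -[size P]addn0 nth_cat_addn. Qed.

Lemma nth_img_p : nth 0 t p = v.
Proof. by rewrite /t /p -[size P]addn0 nth_cat_addn. Qed.

Lemma nth_src_img_leq i : i <= p -> nth 0 s i = nth 0 t i.
Proof.
by rewrite leq_eqVlt => /orP[/eqP ->|]; [rewrite nth_src_p nth_img_p | exact: nth_src_img_lt].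
Qed.

Lemma nth_src_v2 : nth 0 s (p + m + 2) = v.
Proof.
rewrite /s (_ : p + m + 2 = size P + (size W + 0).+2); last by rewrite /p /m; lia.
by rewrite nth_cat_addn /= nth_cat_addn.
Qed.

Lemma nth_src_u : nth 0 s (p + m + 3) = u.
Proof.
rewrite /s (_ : p + m + 3 = size P + (size W + 1).+2); last by rewrite /p /m; lia.
by rewrite nth_cat_addn /= nth_cat_addn.
Qed.

Lemma nth_img_u : nth 0 t (p + m + 3) = u.
Proof.
rewrite /t (_ : p + m + 3 = size P + (size W + 0).+3); last by rewrite /p /m; lia.
by rewrite nth_cat_addn /= nth_cat_addn.
Qed.

Lemma nth_src_R j : nth 0 s (p + m + 4 + j) = nth 0 R j.
Proof. by rewrite src_cat -size_src_head nth_cat_addn. Qed.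

Lemma drop_src_p1 : drop p.+1 s = w :: W ++ v :: u :: R.
Proof. by rewrite /s /p -addn1 drop_cat_addn. Qed.

Lemma drop_img_p2 : drop p.+2 t = w :: W ++ u :: R.
Proof. by rewrite /t /p -addn2 drop_cat_addn. Qed.

Lemma drop_src_R : drop (p + m + 4) s = R.
Proof. by rewrite src_cat -size_src_head drop_size_cat. Qed.

Lemma drop_img_R : drop (p + m + 4) t = R.
Proof. by rewrite img_cat -size_img_head drop_size_cat. Qed.

Lemma size_L : l <= p.
Proof. by rewrite /l /L size_filter (leq_trans (count_size _ _)) // size_iota. Qed.

Lemma rmin_src : rmin s = l + 2 + rmin R.
Proof. by rewrite /rmin rminpos_src size_cat /= /X size_map; lia. Qed.

Lemma rmin_img : rmin t = rmin s.
Proof. by rewrite rmin_src /rmin rminpos_img size_cat /= /X size_map; lia. Qed.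

Lemma rmin_src_lt : rmin s < size s.
Proof.
by rewrite rmin_src size_src; have := size_L; have := rmin_leq_size R; rewrite /p; lia.
Qed.

Lemma Prm_src_l : Prm s l = p + m + 2.
Proof. by rewrite /Prm rminpos_src -[l]addn0 nth_cat_addn. Qed.

Lemma Prm_src_l1 : Prm s l.+1 = p + m + 3.
Proof. by rewrite /Prm rminpos_src -[l.+1]addn1 nth_cat_addn. Qed.

Lemma Prm_img_l : Prm t l = p.
Proof. by rewrite /Prm rminpos_img -[l]addn0 nth_cat_addn. Qed.

Lemma Prm_img_l1 : Prm t l.+1 = p + m + 3.
Proof. by rewrite /Prm rminpos_img -[l.+1]addn1 nth_cat_addn. Qed.

Lemma Prm_src_lt j : j < l -> Prm s j < p.
Proof.
move=> h; rewrite /Prm rminpos_src nth_cat h.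
by have := mem_nth 0 h; rewrite mem_filter mem_iota => /andP[_ /andP[]].
Qed.

Lemma Prm_tail j : l.+1 < j -> j < rmin s ->
  Prm s j = Prm t j /\ exists2 i, i < size R & Prm s j = p + m + 4 + i.
Proof.
move=> h1 h2; have e : j = l + (j - l - 2).+2 by lia.
rewrite /Prm rminpos_src rminpos_img e !nth_cat_addn /=; split => //.
have hj : j - l - 2 < rmin R by move: h2; rewrite rmin_src; lia.
exists (nth 0 (rminpos R) (j - l - 2)); last by rewrite /X (nth_map 0).
by move: (mem_nth 0 hj); rewrite mem_rminpos => /andP[].
Qed.

Lemma Prm_tail1 j : l.+1 <= j -> j < rmin s -> Prm s j = Prm t j /\ p + m + 3 <= Prm s j.
Proof.
rewrite leq_eqVlt => /orP[/eqP <-|h1] h2; first by rewrite Prm_src_l1 Prm_img_l1.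
by have [e [i _ ei]] := Prm_tail h1 h2; rewrite -e ei; split => //; lia.
Qed.

Lemma rpos_cond_src_l : rpos_cond s l.
Proof.
rewrite /rpos_cond /Rmin Prm_src_l nth_src_v2 occ_src_v count_cat /=.
have hA : (l == 0) || (Prm s l.-1 < p).
  by case: l Prm_src_lt => //= l' h; apply: h.
have hB : (l == 0) || (Prm s l.-1 < p + m + 2) by case/orP: hA => [-> //|h]; rewrite orbC; lia.
by rewrite hA hB addn2.
Qed.

Lemma rpos_cond_img_l1 : rpos_cond t l.+1.
Proof.
rewrite /rpos_cond /Rmin Prm_img_l1 nth_img_u occ_img_u count_cat /= Prm_img_l ltnSn.
by rewrite (_ : p < p + m + 3) ?addn2 //; lia.
Qed.

Lemma rpos_cond_src_l1 : ~~ rpos_cond s l.+1.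
Proof.
rewrite /rpos_cond /Rmin Prm_src_l1 nth_src_u occ_src_u count_cat /= Prm_src_l.
rewrite (_ : (p + m + 2 < p + m + 3) = true); last by apply/idP; lia.
rewrite (@eq_in_count _ _ pred0) ?count_pred0 //.
move=> i; rewrite mem_filter mem_iota => /and3P[_ _ h] /=.
by apply/negbTE; rewrite -leqNgt; lia.
Qed.

(* Beyond [l.+1] both sequences end with [R], preceded by prefixes of equal length. *)
Lemma rpos_cond_tail j : l.+1 < j -> j < rmin s -> rpos_cond s j = rpos_cond t j.
Proof.
move=> h1 h2; have [e [i hi ei]] := Prm_tail h1 h2.
have eR : Rmin s j = Rmin t j.
  by rewrite /Rmin -e ei nth_src_R img_cat -size_img_head nth_cat_addn.
rewrite /rpos_cond -eR; have [e' hge] := Prm_tail1 (j := j.-1) ltac:(lia) ltac:(lia).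
rewrite -e' (_ : (j == 0) = false) /=; last by apply/eqP; lia.
move: hge; set c := Prm s j.-1; set r := Rmin s j => hge.
have hc : size src_head <= c.+1 by rewrite size_src_head; lia.
have hc' : size img_head <= c.+1 by rewrite size_img_head; lia.
rewrite !occE src_cat img_cat (count_gt_positions_cat _ _ hc) (count_gt_positions_cat _ _ hc').
by rewrite size_src_head size_img_head.
Qed.

Definition rpos_tail_free := forall j, l.+1 < j < rmin s -> ~~ rpos_cond s j.

Lemma rpos_src_iff : rpos s = l <-> rpos_tail_free.
Proof.
have hne : rmin s != size s by rewrite neq_ltn rmin_src_lt.
split=> [e j /andP[h1 h2] | h]; first by apply: rpos_max => //; rewrite e; lia.
apply: rpos_eq rpos_cond_src_l _ => //; first by rewrite rmin_src; lia.
move=> j /andP[h1 h2]; case: (j =P l.+1) => [-> | hj]; first exact: rpos_cond_src_l1.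
by apply: h; rewrite h2; lia.
Qed.

Lemma rpos_img_iff : rpos t = l.+1 <-> rpos_tail_free.
Proof.
have hne : rmin t != size t by rewrite rmin_img size_img neq_ltn rmin_src_lt.
split=> [e j /andP[h1 h2] | h].
  by rewrite rpos_cond_tail //; apply: rpos_max => //; rewrite e rmin_img; lia.
apply: rpos_eq rpos_cond_img_l1 _ => //; first by rewrite rmin_img rmin_src; lia.
by move=> j /andP[h1 h2]; rewrite rmin_img in h2; rewrite -rpos_cond_tail //; apply: h; lia.
Qed.

Lemma rpos_tail_free_src : (rpos s).+1 < rmin s -> Prm s (rpos s) = p + m + 2 ->
  rpos_tail_free.
Proof.
move=> hr e; apply/rpos_src_iff; apply: (@Prm_inj s) => //; first lia.
  by rewrite rmin_src; lia.
by rewrite e Prm_src_l.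
Qed.

Lemma rpos_tail_free_img : rpos t != 0 -> Prm t (rpos t).-1 = p -> rpos_tail_free.
Proof.
move=> h0 e; have [_ hr _] := rpos_neq0 h0; apply/rpos_img_iff.
suff : (rpos t).-1 = l by lia.
apply: (@Prm_inj t) => //; first lia.
  by rewrite rmin_img rmin_src; lia.
by rewrite e Prm_img_l.
Qed.

Let aP := asc (0 :: P).
Let av := aP + (last 0 P < v).
Let aW := av.+1 + asc (w :: W).

Lemma ascent_after_src : ascent_after 0 0 s = ascent_after 0 0 P &&
  [&& v <= aP.+1, w <= av.+1, ascent_after av.+1 w W, v <= aW.+1, u <= aW.+1
    & ascent_after aW.+1 u R].
Proof.
have vw : v < w by apply: ltn_trans Huw.
rewrite /s ascent_after_cat add0n -/aP !ascent_after_cons vw addn1 -/av ascent_after_cat.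
by rewrite !ascent_after_cons last_wW_ltnF_v addn0 Hvu addn1 -/aW.
Qed.

Lemma ascent_after_img : ascent_after 0 0 t = ascent_after 0 0 P &&
  [&& v <= aP.+1, u <= av.+1, w <= av.+2, ascent_after av.+2 w W, u <= aW.+2
    & ascent_after aW.+1 u R].
Proof.
rewrite /t ascent_after_cat add0n -/aP !ascent_after_cons Hvu addn1 -/av Huw addn1.
by rewrite ascent_after_cat !ascent_after_cons last_wW_ltnF addn0 -addSn.
Qed.

(* The last condition of [in_target] for [t]. *)
Let no_masc_wW := ~~ has (masc t) (iota p.+2 m.+1).

Lemma nth0_src_img : nth 0 s 0 = nth 0 t 0.
Proof. exact: nth_src_img_leq. Qed.

Lemma no_masc_wWE : nth 0 t 0 = 0 -> no_masc_wW = no_masc_after av.+1 u (w :: W).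
Proof.
move=> h0; rewrite /no_masc_wW -all_predC -[p.+2]addn0 iotaDl all_map no_masc_afterE.
apply: eq_in_all => j; rewrite mem_iota => /andP[_ hj].
have hj' : j < size (w :: W) by move: hj; rewrite /m /=; lia.
rewrite (_ : preim _ _ j = ~~ masc t (p.+2 + j)) // /masc.
rewrite (_ : p.+2 + j = size P + j.+2); last by rewrite /p; lia.
rewrite /t nth_cat_addn take_cat_addn.
have -> : nth 0 [:: v, u, w & W ++ u :: R] j.+2 = nth 0 (w :: W) j.
  by rewrite /= -cat_cons nth_cat hj'.
have -> : take j.+2 [:: v, u, w & W ++ u :: R] = [:: v, u & take j (w :: W)].
  by rewrite /= -cat_cons take_cat hj'.
have h0' : nth 0 (P ++ [:: v, u & take j (w :: W)]) 0 = 0 by move: h0; rewrite /t; case: (P).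
rewrite -(asc_cons0 h0') asc_cat -/aP !asc_cons2 Hvu.
set q := asc (u :: take j (w :: W)).
by congr (_ != _); rewrite /av; lia.
Qed.

Lemma nonempty_src : s != [::]. Proof. by rewrite /s; case: (P). Qed.
Lemma nonempty_img : t != [::]. Proof. by rewrite /t; case: (P). Qed.

Lemma is_ascent_src : is_ascent s = is_ascent t && no_masc_wW.
Proof.
apply/idP/idP => [hs | /andP[ht hn]].
  have h0 : nth 0 t 0 = 0 by rewrite -nth0_src_img; case/and3P: hs => _ /eqP.
  rewrite no_masc_wWE // is_ascentE nonempty_img h0 eqxx ascent_after_img /=.
  move: hs; rewrite is_ascentE ascent_after_src => /and3P[_ _ /andP[hP]].
  case/and3P => h1 h2 /and4P[h3 h4 h5 h6].
  rewrite hP h1 h6 Huw addn1 (ascent_after_no_masc h3) (ascent_after_mono _ h3) //.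
  by rewrite /aW; lia.
have h0 : nth 0 t 0 = 0 by case/and3P: ht => _ /eqP.
move: hn; rewrite no_masc_wWE // /= => /andP[hw hn]; rewrite Huw addn1 in hn.
rewrite is_ascentE nonempty_src nth0_src_img h0 eqxx ascent_after_src /=.
move: ht; rewrite is_ascentE ascent_after_img => /and3P[_ _ /andP[hP]].
case/and3P => h1 h2 /and4P[h3 h4 h5 h6].
rewrite hP h1 h6 (ascent_after_pred h4 hn) !andbT.
by rewrite /aW /av; lia.
Qed.

Lemma asc_img : asc t = asc s.
Proof.
have core : asc (v :: u :: w :: W ++ u :: R) = asc (v :: w :: W ++ v :: u :: R).
  rewrite !asc_cons2 -!cat_cons !asc_cat !asc_cons2 (ltn_trans Hvu Huw).
  rewrite last_wW_ltnF_v last_wW_ltnF Huw Hvu /=.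
  lia.
rewrite /s /t; case: (P) => [|y P'] //.
by rewrite !cat_cons !asc_cat (asc_cons2 _ v (u :: _)) (asc_cons2 _ v (w :: _)) core.
Qed.

Lemma rep_img : rep t = rep s.
Proof.
rewrite /rep size_img; congr (_ - _); apply/perm_size/perm_undup => z.
rewrite /s /t !mem_cat !inE !mem_cat !inE.
by case: (z \in P); case: (z == v); case: (z == u); case: (z == w); case: (z \in W).
Qed.

Lemma zero_src : zero s = zero t + (v == 0).
Proof.
have hu : (u == 0) = false by apply/negbTE; rewrite -lt0n; apply: leq_ltn_trans Hvu.
by rewrite /zero /s /t !count_cat /= !count_cat /= hu; lia.
Qed.

(* If [v = 0], no entry of [P] is below the later [v]; if [v <> 0], the first
   entry 0 lies weakly left of a right-to-left minimum of value 0, which must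
   then be in [P]. *)
Lemma Rmin_src_eq0 : is_ascent s -> (v == 0) = (l == 0).
Proof.
move=> hs; case: (v =P 0) => hv0.
  apply/esym/eqP; rewrite /l /L filter_in_pred0 // => i _.
  by rewrite below_catF // hv0.
have hsz : 0 < size s by rewrite size_src; lia.
apply/esym/negbTE; have [j [_ hj hle]] := rminpos_leq_exists hsz.
case/and3P: hs => _ /eqP h0 _; rewrite h0 leqn0 in hle.
move: hj; rewrite rminpos_src mem_cat => /orP[hjL|]; first by rewrite /l; case: (L) hjL.
rewrite !inE => /orP[/eqP e|/orP[/eqP e|/mapP[i hi e]]].
- by move: hle; rewrite e nth_src_v2 => /eqP.
- by move: hle; rewrite e nth_src_u => /eqP hu; move: Hvu; rewrite hu.
- have hiR : i < size R by move: hi; rewrite mem_rminpos => /andP[].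
  by move: hle; rewrite e nth_src_R => /eqP hr; have := all_nthP 0 HR i hiR; rewrite hr.
Qed.

(* A fixed point at or after [p] would make the prefix ending at [p] equal to
   [0, 1, ..., p], hence [v = p]; but then [w > v + 1] sits at position [p + 1]. *)
Lemma no_fixpoint_from_p x : is_ascent x -> nth 0 x p = v -> is_ascent s ->
  forall i, p <= i -> nth 0 x i != i.
Proof.
move=> hx hp hs i hi; apply/eqP => e.
have := ascent_fixed_prefix hx e hi; rewrite hp => ev.
have := ascent_nth_leq_index p.+1 hs.
by rewrite -[p.+1]addn0 -nth_drop drop_src_p1 /=; lia.
Qed.

Lemma maxst_ealm_img : is_ascent s -> maxst t = maxst s /\ ealm t = ealm s.
Proof.
move=> hs; have ht : is_ascent t by move: hs; rewrite is_ascent_src => /andP[].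
have hps : p <= size s by rewrite size_src; lia.
have hpt : p <= size t by rewrite size_img.
have es := maxst_take hps (no_fixpoint_from_p hs nth_src_p hs).
have et := maxst_take hpt (no_fixpoint_from_p ht nth_img_p hs).
have em : maxst t = maxst s.
  rewrite es et; apply: eq_in_count => i; rewrite mem_iota => /andP[_ hi] /=.
  by rewrite nth_src_img_lt.
split => //; rewrite /ealm em size_img; case: ifP => // _.
by rewrite nth_src_img_leq // es (leq_trans (count_size _ _)) // size_iota.
Qed.

Hypothesis Htail : rpos_tail_free.

Lemma rpos_src : rpos s = l. Proof. exact/rpos_src_iff. Qed.
Lemma rpos_img : rpos t = l.+1. Proof. exact/rpos_img_iff. Qed.

Lemma f51_src : f51 s = t.
Proof.
rewrite /f51 rpos_src Prm_src_l nth_src_v2.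
have -> : rocc2 s v = p by rewrite /rocc2 occ_src_v rev_cat.
rewrite (_ : (p + m + 2).+1 = p + m + 3) ?nth_src_u; last lia.
have -> : take p s = P by rewrite take_size_cat.
rewrite drop_src_p1 (_ : (p + m + 3).+1 = p + m + 4) ?drop_src_R; last lia.
rewrite (_ : p + m + 2 - p.+1 = (size W).+1); last by rewrite /m; lia.
by rewrite (_ : w :: W ++ _ = (w :: W) ++ v :: u :: R) // take_size_cat.
Qed.

Lemma f51_inv_img : f51_inv t = s.
Proof.
rewrite /f51_inv rpos_img Prm_img_l1 /= Prm_img_l nth_img_p nth_img_u.
have -> : take p t = P by rewrite take_size_cat.
rewrite drop_img_p2 (_ : (p + m + 3).+1 = p + m + 4) ?drop_img_R; last lia.
rewrite (_ : p + m + 3 - p.+2 = (size W).+1); last by rewrite /m; lia.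
by rewrite (_ : w :: W ++ _ = (w :: W) ++ u :: R) // take_size_cat.
Qed.

Lemma sebr_src : sebr s = foldr minn w W.
Proof.
rewrite /sebr rpos_src /Rmin Prm_src_l nth_src_v2 /rocc1 /rocc2 occ_src_v size_cat rev_cat /=.
rewrite ltnNge leq_addl /= map_nth_iota; last by rewrite size_src; lia.
rewrite drop_src_p1 (_ : p + m + 2 - p.+1 = (size W).+1); last by rewrite /m; lia.
by rewrite (_ : w :: W ++ _ = (w :: W) ++ v :: u :: R) // take_size_cat.
Qed.

Lemma in_T51_src : in_T51 s = is_ascent s.
Proof.
apply/idP/idP => [/and5P[/andP[] //] | hs].
have hgt : u < foldr minn w W by rewrite ltn_foldr_minn; exact: below_wW.
rewrite /in_T51 /in_Astar hs sebr_src rpos_src Prm_src_l1 Prm_src_l /Rmin Prm_src_l1 nth_src_u.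
rewrite hgt andbT; apply/and5P; split; last by apply/eqP; lia.
- apply/eqP => e; have := iota_uniq 0 (size s); rewrite -e /s cat_uniq /=.
  by case/and5P => _ _ /negP[]; rewrite in_cons mem_cat mem_head !orbT.
- by rewrite rmin_src size_src; have := size_L; have := rmin_leq_size R; rewrite /p; lia.
- by rewrite -lt0n (leq_ltn_trans _ hgt).
- by rewrite rmin_src; lia.
Qed.

Lemma in_target_img n : in_target n t = [&& is_ascent t, no_masc_wW & size t == n].
Proof.
rewrite /in_target /in_A rpos_img /= /Rmin Prm_img_l1 nth_img_u Prm_img_l.
rewrite /rocc1 /rocc2 occ_img_u rev_cat /= /adjacent eqxx /=.
rewrite (_ : p + m + 3 - p.+2 = m.+1); last lia.
have -> : (p.+2 == p + m + 3) || ((p + m + 3).+1 == p.+1) = false.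
  by apply/norP; split; apply/eqP; lia.
rewrite /no_masc_wW; move: (has _ _) (is_ascent t) (size t == n) => b1 b2 b3.
by case: b1; case: b2; case: b3.
Qed.

Lemma T51_src_target_img n : (in_T51 s && in_A n s) = in_target n t.
Proof. by rewrite in_target_img /in_A in_T51_src andbA andbb is_ascent_src size_img andbA. Qed.

Lemma f51_src_stats : is_ascent s ->
  [/\ asc t = asc s, rep t = rep s, maxst t = maxst s, ealm t = ealm s & rmin t = rmin s]
  /\ rpos s = rpos t - 1 /\ zero s = zero t + (rpos s == 0).
Proof.
move=> hs; have [hmax healm] := maxst_ealm_img hs.
split; first by split; rewrite ?asc_img ?rep_img ?rmin_img.
by rewrite rpos_src rpos_img subn1 zero_src (Rmin_src_eq0 hs).
Qed.

End Pattern.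

(** * Decomposing the sequences of T51 and of the target *)

Lemma cat_take_nth2 x a b : a < b < size x ->
  x = take a x ++ nth 0 x a :: take (b - a.+1) (drop a.+1 x) ++ nth 0 x b :: drop b.+1 x.
Proof.
move=> /andP[hab hb]; rewrite -{1}(cat_take_drop a x) (drop_nth 0 (ltn_trans hab hb)).
congr (_ ++ _ :: _); rewrite -{1}(cat_take_drop (b - a.+1) (drop a.+1 x)) drop_drop subnK //.
by rewrite (drop_nth 0 hb).
Qed.

Lemma T51_shape s : in_T51 s -> exists P W R v u w,
  [/\ pattern51 W R v u w, s = P ++ v :: w :: W ++ v :: u :: R
    & Prm s (rpos s) = size P + size W + 2].
Proof.
case/and5P => _ _ hsebr /andP[hr hlt] /eqP hprm.
have [hq hq'] := Prm_rminpos (ltnW hr); have [hq1 hq1'] := Prm_rminpos hr.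
have [e1 e2] := rocc_below hq hq'; have eo := occ_below hq hq'.
move: hsebr hlt hq' hq1 hq1' e1 e2 eo; rewrite /sebr /Rmin hprm.
set q := Prm s (rpos s); set v := nth 0 s q; set u := nth 0 s q.+1.
set O := filter _ (iota 0 q) => hsebr hlt hq' hq1 hq1' e1 e2 eo.
rewrite eo size_rcons e1 e2 in hsebr hlt.
have hd1 : drop q.+1 s = u :: drop q.+2 s by rewrite (drop_nth 0 hq1).
have huv : v < u by move: hq'; rewrite hd1 => /andP[].
case EO: O hsebr hlt => [|o O'] //= hsebr hlt.
have : last o O' \in O by rewrite EO; exact: mem_last.
rewrite mem_filter mem_iota => /andP[/eqP hav /andP[_ haq]].
set a := last o O' in hav haq hsebr hlt.
rewrite map_nth_iota in hsebr hlt; last lia.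
case EW: (take (q - a.+1) (drop a.+1 s)) hsebr hlt => [|w W] // _.
rewrite ltn_foldr_minn => /andP[huw hW].
have hsz : size (w :: W) = q - a.+1 by rewrite -EW size_takel // size_drop; lia.
exists (take a s), W, (drop q.+2 s), v, u, w; split => //.
- rewrite {1}(@cat_take_nth2 s a q) ?haq // hav EW -/v hd1 //.
- by rewrite size_takel; move: hsz => /=; lia.
Qed.

Lemma T51_decompose s : in_T51 s -> exists P W R v u w,
  [/\ pattern51 W R v u w, rpos_tail_free P W R v u w & s = P ++ v :: w :: W ++ v :: u :: R].
Proof.
move=> hT; have [P [W [R [v [u [w [hpat es hprm]]]]]]] := T51_shape hT.
exists P, W, R, v, u, w; split => //; subst s; apply: rpos_tail_free_src hpat _ hprm.
by case/and5P: hT => _ _ _ /andP[].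
Qed.

Lemma target_layout n t : in_target n t ->
  [/\ (Prm t (rpos t).-1).+2 < Prm t (rpos t),
      nth 0 t (Prm t (rpos t).-1).+1 = Rmin t (rpos t) &
      forall j, (Prm t (rpos t).-1).+1 < j < Prm t (rpos t) -> Rmin t (rpos t) < nth 0 t j].
Proof.
case/and5P => _ hr0 hadj hnadj _; have [_ hr hc] := rpos_neq0 hr0.
have hr1 : (rpos t).-1 < rpos t by rewrite prednK ?lt0n.
have hab := Prm_lt hr1 hr; have [hb hb'] := Prm_rminpos hr.
have [e1 e2] := rocc_below hb hb'; have eo := occ_below hb hb'.
have hbetween := @Rmin_leq_between t (rpos t).-1; rewrite prednK ?lt0n // in hbetween.
move: hadj hnadj hc hab e1 e2 eo hbetween; rewrite /rpos_cond /Rmin (negbTE hr0).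
set a := Prm t (rpos t).-1; set b := Prm t (rpos t); set u := nth 0 t b.
set O := filter _ (iota 0 b) => hadj hnadj hc hab e1 e2 eo hbetween.
rewrite e1 e2 in hadj hnadj; rewrite eo -cats1 count_cat /= hab addn1 ltnS -has_count in hc.
have [i hiO hai] := hasP hc; have := hiO; rewrite mem_filter mem_iota => /andP[_ /andP[_ hib]].
have hic : i <= last 0 O.
  by apply: last_filter_iota_ge hib _; move: hiO; rewrite mem_filter => /andP[].
have := mem_last 0 O; rewrite inE => /orP[/eqP hc0 | ].
  by move: hic hai; rewrite hc0; lia.
rewrite mem_filter mem_iota => /andP[/eqP hcu /andP[_ hcb]].
have hca : last 0 O = a.+1 by move: hadj; rewrite /adjacent; lia.
split; [by move: hnadj; rewrite /adjacent hca; lia | by rewrite -hca | move=> j /andP[h1 h2]].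
rewrite ltn_neqAle (hbetween j hr) ?andbT; last by rewrite h2 andbT; lia.
apply/eqP => hj; have := @last_filter_iota_ge (fun i => nth 0 t i == u) b j h2.
by rewrite -/O hca hj eqxx => /(_ isT); lia.
Qed.

Lemma target_shape n t : in_target n t -> exists P W R v u w,
  [/\ pattern51 W R v u w, t = P ++ v :: u :: w :: W ++ u :: R
    & Prm t (rpos t).-1 = size P].
Proof.
move=> ht; have [hab2 ha1 hWu] := target_layout ht.
case/and5P: ht => _ hr0 _ _ _; have [_ hr _] := rpos_neq0 hr0.
have hr1 : (rpos t).-1 < rpos t by rewrite prednK ?lt0n.
have hab := Prm_lt hr1 hr; have [hb hb'] := Prm_rminpos hr.
have [ha ha'] := Prm_rminpos (ltn_trans hr1 hr).
move: hab2 ha1 hWu ha' hb' hab; rewrite /Rmin.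
set a := Prm t (rpos t).-1; set b := Prm t (rpos t); set v := nth 0 t a; set u := nth 0 t b.
move=> hab2 ha1 hWu ha' hb' hab.
have hvu : v < u by apply: all_drop_ltn_nth ha' _; rewrite hab hb.
have hsz : size (take (b - a.+2) (drop a.+2 t)) = b - a.+2.
  by rewrite size_takel // size_drop; lia.
case EW: (take (b - a.+2) (drop a.+2 t)) hsz => [|w W] /= hsz; first lia.
have /andP[huw hW] : below u (w :: W).
  rewrite -EW; apply/(all_nthP 0) => k; rewrite size_takel ?size_drop => [hk|]; last lia.
  by rewrite nth_take // nth_drop; apply: hWu; lia.
exists (take a t), W, (drop b.+1 t), v, u, w; split => //.
- rewrite {1}(@cat_take_nth2 t a b) ?hab // (drop_nth 0 (_ : a.+1 < size t)); last lia.
  rewrite ha1 (_ : b - a.+1 = (b - a.+2).+1); last lia.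
  by rewrite /= EW.
- by rewrite size_takel // ltnW.
Qed.

Lemma target_decompose n t : in_target n t -> exists P W R v u w,
  [/\ pattern51 W R v u w, rpos_tail_free P W R v u w & t = P ++ v :: u :: w :: W ++ u :: R].
Proof.
move=> ht; have [P [W [R [v [u [w [hpat et hprm]]]]]]] := target_shape ht.
exists P, W, R, v, u, w; split => //; subst t; apply: rpos_tail_free_img hpat _ hprm.
by case/and5P: ht.
Qed.

Lemma f51K s : in_T51 s -> f51_inv (f51 s) = s.
Proof.
move=> /T51_decompose[P [W [R [v [u [w [hpat htl ->]]]]]]].
by rewrite (f51_src hpat htl) (f51_inv_img hpat htl).
Qed.

Theorem mainTheorem13 (n : nat) :
  exists f : seq nat -> seq nat,
    [/\ (forall s, in_T51 s -> in_A n s -> in_target n (f s)),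
        {in [pred s | in_T51 s && in_A n s] &, injective f},
        (forall t, in_target n t -> exists2 s, in_T51 s && in_A n s & f s = t) &
        (forall s, in_T51 s -> in_A n s ->
           [/\ asc (f s) = asc s, rep (f s) = rep s, maxst (f s) = maxst s,
               ealm (f s) = ealm s & rmin (f s) = rmin s] /\
           rpos s = rpos (f s) - 1 /\
           zero s = zero (f s) + (rpos s == 0))].
Proof.
exists f51; split.
- move=> s hT hA; have [P [W [R [v [u [w [hpat htl es]]]]]]] := T51_decompose hT.
  by rewrite es (f51_src hpat htl) -(T51_src_target_img hpat htl) -es hT.
- move=> s1 s2; rewrite !inE => /andP[h1 _] /andP[h2 _] e.
  by rewrite -(f51K h1) -(f51K h2) e.
- move=> t ht; have [P [W [R [v [u [w [hpat htl et]]]]]]] := target_decompose ht.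
  exists (P ++ v :: w :: W ++ v :: u :: R); last by rewrite et (f51_src hpat htl).
  by rewrite (T51_src_target_img hpat htl) -et.
- move=> s hT /andP[hA _]; have [P [W [R [v [u [w [hpat htl es]]]]]]] := T51_decompose hT.
  by subst s; rewrite (f51_src hpat htl); exact: f51_src_stats.
Qed.
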